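(* Every centrality has ties on every graph that is not rigid. Moreover, there exists a centrality $f$ such that for every rigid graph $G$, $f$ has no ties on $G$.
   Context: A graph $G=(V_G,E_G)$ is a finite directed graph with node set $V_G=\{0,1,\dots,n-1\}$ and arc set $E_G\subseteq V_G\times V_G$; write $x\to y$ for $(x,y)\in E_G$. An isomorphism $\varphi:G\to H$ is a bijection $V_G\to V_H$ such that $x\to_G y$ iff $\varphi(x)\to_H\varphi(y)$; an automorphism is an isomorphism $G\to G$. A graph is rigid if its only automorphism is the identity. A centrality $f$ is a function associating with each graph $G$ a map $f_G:V_G\to\mathbb{R}$ such that whenever $\varphi:G\to H$ is an isomorphism, $f_G(x)=f_H(\varphi(x))$ for all $x\in V_G$ (values may be negative). A centrality $f$ has no ties on $G$ if $f_G(x)\neq f_G(y)$ for all distinct $x,y\in V_G$; otherwise it has ties on $G$. *)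

From mathcomp Require Import all_boot.
From Stdlib Require Import Reals.
Unset Printing Implicit Defensive.

Record graph := Graph { nv : nat; arcs : {set 'I_nv * 'I_nv} }.

Definition arc (G : graph) (x y : 'I_(nv G)) : bool := (x, y) \in arcs G.

Definition is_iso (G H : graph) (phi : 'I_(nv G) -> 'I_(nv H)) : Prop :=
  bijective phi /\ forall x y, arc G x y = arc H (phi x) (phi y).

Definition rigid (G : graph) : Prop :=
  forall phi : 'I_(nv G) -> 'I_(nv G), is_iso G G phi -> forall x, phi x = x.

Definition centrality (f : forall G : graph, 'I_(nv G) -> R) : Prop :=
  forall (G H : graph) (phi : 'I_(nv G) -> 'I_(nv H)),
    is_iso G H phi -> forall x, f G x = f H (phi x).

Definition no_ties (f : forall G : graph, 'I_(nv G) -> R) (G : graph) : Prop :=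
  forall x y : 'I_(nv G), x <> y -> f G x <> f G y.

Definition has_ties (f : forall G : graph, 'I_(nv G) -> R) (G : graph) : Prop :=
  ~ no_ties f G.

From mathcomp Require Import all_boot.
From Stdlib Require Import Reals ClassicalEpsilon.

(* Isomorphism invariance forces phi x and x to get the same value for every
   automorphism phi, so a non-rigid graph always has ties.  Conversely, label
   the nodes of G injectively by naturals, the root x by 0, and record the
   labels used and the labelled arcs: such a key presents the rooted graph
   (G, x), and two rooted graphs with a common key are isomorphic.  Choosing
   the key canonically (xchoose depends only on the set of admissible keys)
   and encoding it as a natural number yields a centrality; on a rigid graph
   equal values at x and y give an automorphism mapping x to y, so x = y. *)

Set Implicit Arguments.

Lemma is_iso_inv (G H : graph) (phi : 'I_(nv G) -> 'I_(nv H)) :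
  is_iso G H phi -> exists2 g, is_iso H G g & cancel phi g.
Proof.
case=> [[g phiK gK] arc_phi]; exists g => //.
by split=> [|i j]; [exists phi | rewrite arc_phi !gK].
Qed.

Lemma centrality_auto f (G : graph) (phi : 'I_(nv G) -> 'I_(nv G)) x :
  centrality f -> is_iso G G phi -> f G (phi x) = f G x.
Proof. by move=> f_centrality phi_iso; rewrite -(f_centrality _ _ _ phi_iso). Qed.

Lemma centrality_has_ties_nonrigid f (G : graph) :
  centrality f -> ~ rigid G -> has_ties f G.
Proof.
move=> f_centrality G_nonrigid f_noties; apply: G_nonrigid => phi phi_iso x.
case: (eqVneq (phi x) x) => // /eqP phix_neq_x; exfalso.
exact: f_noties phix_neq_x (centrality_auto x f_centrality phi_iso).
Qed.

Definition key := (seq nat * seq (nat * nat))%type.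

Definition arc_image (G : graph) (s : 'I_(nv G) -> nat) : seq (nat * nat) :=
  [seq (s p.1, s p.2) | p <- enum (arcs G)].

Definition presents (G : graph) (x : 'I_(nv G)) (k : key) : Prop :=
  exists s : 'I_(nv G) -> nat,
    [/\ injective s, s x = 0%N, k.1 =i codom s & k.2 =i arc_image G s].

Lemma mem_arc_image (G : graph) (s : 'I_(nv G) -> nat) i j :
  injective s -> ((s i, s j) \in arc_image G s) = arc G i j.
Proof.
move=> s_inj.
have pair_inj : injective (fun p : 'I_(nv G) * 'I_(nv G) => (s p.1, s p.2)).
  by case=> [i1 j1] [i2 j2] /= [/s_inj -> /s_inj ->].
by rewrite (mem_map pair_inj _ (i, j)) mem_enum.
Qed.

Lemma codom_comp_bij {T U : finType} {V : eqType} (phi : T -> U) (t : U -> V) :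
  bijective phi -> codom (t \o phi) =i codom t.
Proof.
case=> g _ gK a; apply/codomP/codomP => [[i ->]|[j ->]]; first by exists (phi i).
by exists (g j) => /=; rewrite gK.
Qed.

Lemma arc_image_comp_iso (G H : graph) (phi : 'I_(nv G) -> 'I_(nv H)) t :
  is_iso G H phi -> arc_image G (t \o phi) =i arc_image H t.
Proof.
case=> [[g phiK gK] arc_phi] [a b].
apply/mapP/mapP => [[[i j]]|[[i j]]]; rewrite mem_enum => ij_arc ->.
  by exists (phi i, phi j); rewrite // mem_enum -[_ \in _]arc_phi.
exists (g i, g j); last by rewrite /= !gK.
by rewrite mem_enum; move: (arc_phi (g i) (g j)); rewrite /arc !gK => ->.
Qed.

Lemma presents_exists (G : graph) (x : 'I_(nv G)) : exists k, presents G x k.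
Proof.
pose s i : nat := if i == x then 0%N else (val i).+1.
have s_inj : injective s.
  by move=> i j; rewrite /s; do 2!case: eqVneq => [->|_] //; case=> /val_inj.
by exists (codom s, arc_image G s), s; split; rewrite // /s eqxx.
Qed.

Lemma presents_pullback (G H : graph) (phi : 'I_(nv G) -> 'I_(nv H)) x k :
  is_iso G H phi -> presents H (phi x) k -> presents G x k.
Proof.
move=> phi_iso [t [t_inj tx k1 k2]]; have [phi_bij _] := phi_iso.
exists (t \o phi); split=> [||a|p]; first exact: inj_comp t_inj (bij_inj phi_bij).
- exact: tx.
- by rewrite k1 (codom_comp_bij t phi_bij).
- by rewrite k2 (arc_image_comp_iso t phi_iso).
Qed.

Lemma presents_iso (G H : graph) (phi : 'I_(nv G) -> 'I_(nv H)) x k :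
  is_iso G H phi -> presents H (phi x) k <-> presents G x k.
Proof.
move=> phi_iso; have [g g_iso phiK] := is_iso_inv phi_iso.
split; first exact: presents_pullback.
by rewrite -{1}(phiK x); apply: presents_pullback.
Qed.

Lemma presents_iso_root (G H : graph) x y k :
  presents G x k -> presents H y k ->
  exists2 phi : 'I_(nv G) -> 'I_(nv H), is_iso G H phi & phi x = y.
Proof.
move=> [s [s_inj sx s1 s2]] [t [t_inj ty t1 t2]].
have /fin_all_exists [phi tphi] : forall i, exists j, s i = t j.
  by move=> i; apply/codomP; rewrite -t1 s1 codom_f.
have /fin_all_exists [psi spsi] : forall j, exists i, t j = s i.
  by move=> j; apply/codomP; rewrite -s1 t1 codom_f.
exists phi; last by apply: t_inj; rewrite -tphi sx ty.
split.
  exists psi => [i|j]; first by apply: s_inj; rewrite -spsi -tphi.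
  by apply: t_inj; rewrite -tphi -spsi.
by move=> i j; rewrite -(mem_arc_image _ _ _ t_inj) -!tphi -t2 s2 mem_arc_image.
Qed.

Definition presentsb (G : graph) (x : 'I_(nv G)) (k : key) : bool :=
  if excluded_middle_informative (presents G x k) then true else false.

Lemma presentsP (G : graph) (x : 'I_(nv G)) k :
  reflect (presents G x k) (presentsb G x k).
Proof. by rewrite /presentsb; case: excluded_middle_informative; constructor. Qed.

Lemma presentsb_exists (G : graph) (x : 'I_(nv G)) : exists k, presentsb G x k.
Proof. by have [k ?] := presents_exists G x; exists k; apply/presentsP. Qed.

Definition code (G : graph) (x : 'I_(nv G)) : key :=
  xchoose (presentsb_exists G x).

Lemma code_presents (G : graph) (x : 'I_(nv G)) : presents G x (code G x).
Proof. exact/presentsP/xchooseP. Qed.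

Lemma code_iso (G H : graph) (phi : 'I_(nv G) -> 'I_(nv H)) x :
  is_iso G H phi -> code H (phi x) = code G x.
Proof.
move=> phi_iso; apply: eq_xchoose => k.
by apply/presentsP/presentsP; rewrite presents_iso.
Qed.

Definition canonical_centrality (G : graph) (x : 'I_(nv G)) : R :=
  INR (pickle (code G x)).

Lemma canonical_centralityP : centrality canonical_centrality.
Proof.
by move=> G H phi phi_iso x; rewrite /canonical_centrality (code_iso x phi_iso).
Qed.

Lemma canonical_centrality_no_ties (G : graph) :
  rigid G -> no_ties canonical_centrality G.
Proof.
move=> G_rigid x y x_neq_y /INR_eq /(pcan_inj pickleK) code_xy; apply: x_neq_y.
have y_code_x : presents G y (code G x) by rewrite code_xy; apply: code_presents.
have [phi phi_iso <-] := presents_iso_root (code_presents G x) y_code_x.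
by rewrite G_rigid.
Qed.

Theorem theorem1 :
  (forall f : forall G : graph, 'I_(nv G) -> R,
      centrality f -> forall G : graph, ~ rigid G -> has_ties f G) /\
  (exists f : forall G : graph, 'I_(nv G) -> R,
      centrality f /\ forall G : graph, rigid G -> no_ties f G).
Proof.
split=> [f f_centrality G|]; first exact: centrality_has_ties_nonrigid.
exists canonical_centrality; split; first exact: canonical_centralityP.
exact: canonical_centrality_no_ties.
Qed.
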